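(* Let $K$ be an algebraically closed field of characteristic zero. For any integers $s\ge 1$ and $c\ge 2$ there is an Artinian complete intersection graded $K$-algebra $A_F=K[x_1,\dots,x_c]/\operatorname{Ann}(F)$ of codimension $c$ whose Macaulay dual generator $F\in K[X_1,\dots,X_c]$ is a sum of $s$ monomials. Moreover, this $A_F$ satisfies the strong Lefschetz property.
   Context: $K[X_1,\dots,X_c]$ is the divided power algebra, a module over $R=K[x_1,\dots,x_c]$ via contraction $x_i\circ X_j^k=\delta_{ij}X_j^{k-1}$ if $k>0$ and $0$ otherwise; for homogeneous $F$, $\operatorname{Ann}(F)=\{f\in R\mid f\circ F=0\}$, $A_F=R/\operatorname{Ann}(F)$, and $F$ is its Macaulay dual generator. A graded Artinian $K$-algebra $A$ has the strong Lefschetz property if there is a linear form $\ell\in A_1$ such that for all $i\ge 0$, $k\ge 1$ the map $\times\ell^k:A_i\to A_{i+k}$ has maximal rank. *)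

From HB Require Import structures.
From mathcomp Require Import all_boot all_order all_algebra all_field.
From mathcomp Require Import mpoly.
Set Implicit Arguments. Unset Strict Implicit. Unset Printing Implicit Defensive.
Import Order.TTheory GRing.Theory.
Local Open Scope ring_scope.

(* The polynomial ring R = K[x_1..x_c] is {mpoly K[c]}.
   The divided power algebra K[X_1..X_c] is represented, as a K-vector
   space, by the same type {mpoly K[c]}: the element 'X_[b] stands for the
   divided monomial X^[b] = X_1^[b_1] ... X_c^[b_c].  Only its K-module
   structure and the contraction action are used. *)

Definition contract (K : fieldType) (c : nat) (f F : {mpoly K[c]}) : {mpoly K[c]} :=
  \sum_(a <- msupp f) \sum_(b <- msupp F)
     (f@_a * F@_b) *: (if (a <= b)%MM then 'X_[(b - a)%MM] else 0).

Definition in_Ann (K : fieldType) (c : nat) (F f : {mpoly K[c]}) : Prop :=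
  contract f F = 0.

(* A_F is a complete intersection: Ann(F) is generated by c elements
   (A_F is automatically Artinian). *)
Definition complete_intersection (K : fieldType) (c : nat) (F : {mpoly K[c]}) : Prop :=
  exists g : 'I_c -> {mpoly K[c]},
    forall f : {mpoly K[c]},
      in_Ann F f <-> exists h : 'I_c -> {mpoly K[c]}, f = \sum_(i < c) h i * g i.

(* A_F has codimension c: no nonzero linear form lies in Ann(F),
   i.e. dim_K (A_F)_1 = c. *)
Definition full_codim (K : fieldType) (c : nat) (F : {mpoly K[c]}) : Prop :=
  forall l : {mpoly K[c]}, l \is 1.-homog -> in_Ann F l -> l = 0.

(* Strong Lefschetz property of A_F = R/Ann(F) (graded, F homogeneous):
   there is a linear form l such that for all i >= 0, k >= 1 the map
   x l^k : (A_F)_i -> (A_F)_{i+k} (with (A_F)_j = R_j / Ann(F)_j) is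
   injective or surjective. *)
Definition SLP (K : fieldType) (c : nat) (F : {mpoly K[c]}) : Prop :=
  exists l : {mpoly K[c]}, l \is 1.-homog /\
    forall i k : nat, (0 < k)%N ->
      (forall f : {mpoly K[c]}, f \is i.-homog ->
          in_Ann F (l ^+ k * f) -> in_Ann F f)
      \/
      (forall g : {mpoly K[c]}, g \is (i + k)%N.-homog ->
          exists f : {mpoly K[c]}, f \is i.-homog /\ in_Ann F (g - l ^+ k * f)).

(* Let the shear x_1 |-> t x_0 + x_1 act contragrediently on the divided powers.
   It sends X^[b], b = (m,1,...,1), to
     F = \sum_(q <= m) t^q (q+1) X_0^[m-q] X_1^[q+1] X_2 ... X_(c-1),
   which has m + 1 terms when t != 0 (and is X^[b] when t = 0).  A linear change
   of coordinates transports annihilators, so A_F is isomorphic to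
   A_(X^[b]) = K[x]/(x_i^(b_i+1)): a complete intersection, of codimension c
   since every b_i >= 1.  For this monomial complete intersection the Lefschetz
   property comes from sl_2: contraction by l = x_0 + ... + x_(c-1) and an
   explicit raising operator make the span of the X^[a], a <= b, a graded
   sl_2-module, and the weight computation in characteristic zero shows that the
   powers of the lowering operator have maximal rank between graded pieces. *)

From HB Require Import structures.
From mathcomp Require Import all_boot all_order all_algebra all_field.
From mathcomp Require Import mpoly.
From mathcomp Require Import ring zify.
Set Implicit Arguments. Unset Strict Implicit. Unset Printing Implicit Defensive.
Import Order.TTheory GRing.Theory.
Local Open Scope ring_scope.

Section Multinomials.
Variable n : nat.
Implicit Types a b : 'X_{1..n}.

Lemma lepmD_subm a a' b : (a + a' <= b)%MM = (a' <= b)%MM && (a <= b - a')%MM.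
Proof.
apply/mnm_lepP/andP => [le_aa'b | [/mnm_lepP le_a'b /mnm_lepP le_ab]] => [|i].
  by split; apply/mnm_lepP => i; have := le_aa'b i; rewrite mnmDE ?mnmBE; lia.
by have := le_a'b i; have := le_ab i; rewrite mnmDE mnmBE; lia.
Qed.

Lemma lepm_mdeg a b : (a <= b)%MM -> (mdeg a <= mdeg b)%N.
Proof. by move=> le_ab; rewrite -(submK le_ab) mdegD leq_addl. Qed.

Lemma mdeg_subm a b : (a <= b)%MM -> mdeg (b - a) = (mdeg b - mdeg a)%N.
Proof. by move=> le_ab; rewrite -{2}(submK le_ab) mdegD addnK. Qed.

End Multinomials.

Section LinearExtension.
Variables (K : fieldType) (n : nat) (V : lmodType K).
Implicit Types (p q : {mpoly K[n]}) (g : 'X_{1..n} -> V).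

Definition mlin g p : V := \sum_(m <- msupp p) p@_m *: g m.

Lemma mlin_wide g p (s : seq 'X_{1..n}) : uniq s -> {subset msupp p <= s} ->
  mlin g p = \sum_(m <- s) p@_m *: g m.
Proof.
move=> s_uniq supp_s; rewrite /mlin [RHS](bigID (mem (msupp p))) /=.
rewrite [X in _ + X]big1 ?addr0 => [|m /memN_msupp_eq0 ->]; last by rewrite scale0r.
rewrite -[RHS]big_filter; apply: perm_big.
apply: uniq_perm; rewrite ?filter_uniq ?msupp_uniq //.
by move=> m; rewrite mem_filter andb_idr // => /supp_s.
Qed.

Lemma mlin_is_linear g : linear (mlin g).
Proof.
move=> a p q; pose s := undup (msupp p ++ msupp q ++ msupp (a *: p + q)).
have [sp sq spq] : [/\ {subset msupp p <= s}, {subset msupp q <= s}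
    & {subset msupp (a *: p + q) <= s}].
  by split=> m; rewrite mem_undup !mem_cat => ->; rewrite ?orbT.
have s_uniq : uniq s := undup_uniq _.
rewrite (mlin_wide g s_uniq sp) (mlin_wide g s_uniq sq) (mlin_wide g s_uniq spq).
rewrite scaler_sumr -big_split; apply: eq_bigr => m _.
by rewrite mcoeffD mcoeffZ scalerDl scalerA.
Qed.

HB.instance Definition _ g :=
  GRing.isLinear.Build K {mpoly K[n]} V _ (mlin g) (mlin_is_linear g).

Lemma mlinX g m : mlin g 'X_[m] = g m.
Proof. by rewrite /mlin msuppX big_seq1 mcoeffX eqxx scale1r. Qed.

Lemma linear_mpolyE (phi : {mpoly K[n]} -> V) : linear phi ->
  forall p, phi p = mlin (fun m => phi 'X_[m]) p.
Proof.
move=> phi_lin p; rewrite {1}[p]mpolyE /mlin.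
have phi0 : phi 0 = 0.
  by rewrite -[X in phi X](subr0 0) (zmod_morphism_linear phi_lin) subrr.
elim: (msupp p) => [|m s IH]; rewrite ?big_nil // !big_cons.
by rewrite -IH phi_lin.
Qed.

Lemma linear_mpoly_ext (phi psi : {mpoly K[n]} -> V) : linear phi -> linear psi ->
  (forall m, phi 'X_[m] = psi 'X_[m]) -> phi =1 psi.
Proof.
move=> phi_lin psi_lin eq_X p; rewrite (linear_mpolyE phi_lin) (linear_mpolyE psi_lin).
by apply: eq_bigr => m _; rewrite eq_X.
Qed.

End LinearExtension.

Section Contraction.
Variables (K : fieldType) (n : nat).
Implicit Types (f g F P : {mpoly K[n]}) (a b : 'X_{1..n}).

Lemma contract_mpolyX a F :
  contract 'X_[a] F = mlin (fun b => if (a <= b)%MM then 'X_[b - a] else 0) F.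
Proof.
rewrite /contract msuppX big_seq1 /mlin; apply: eq_bigr => b _.
by rewrite mcoeffX eqxx mul1r.
Qed.

Lemma contractEl f F : contract f F = mlin (fun a => contract 'X_[a] F) f.
Proof.
rewrite [LHS]/contract /mlin; apply: eq_bigr => a _; rewrite contract_mpolyX scaler_sumr.
by apply: eq_bigr => b _; rewrite scalerA.
Qed.

Lemma contract_linearl F : linear ((@contract K n)^~ F).
Proof. by move=> c f g; rewrite !contractEl linearP. Qed.

Lemma contract_linearr f : linear (@contract K n f).
Proof.
move=> c F P; rewrite !contractEl /mlin scaler_sumr -big_split; apply: eq_bigr => a _.
by rewrite !contract_mpolyX linearP scalerDr !scalerA mulrC.
Qed.

HB.instance Definition _ f :=
  GRing.isLinear.Build K _ _ _ (@contract K n f) (contract_linearr f).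
HB.instance Definition _ := bilinear_isBilinear.Build K {mpoly K[n]} {mpoly K[n]}
  {mpoly K[n]} _ _ (@contract K n) (contract_linearl, contract_linearr).

Lemma contractXX a b :
  contract 'X_[a] 'X_[b] = if (a <= b)%MM then 'X_[b - a] else 0 :> {mpoly K[n]}.
Proof. by rewrite contract_mpolyX mlinX. Qed.

Lemma contractM f g F : contract (f * g) F = contract f (contract g F).
Proof.
move: f; apply: linear_mpoly_ext => [c f1 f2 | c f1 f2 | a] /=.
- by rewrite mulrDl -scalerAl linearPl.
- exact: linearPl.
move: g; apply: linear_mpoly_ext => [c g1 g2 | c g1 g2 | a'] /=.
- by rewrite mulrDr -scalerAr linearPl.
- by rewrite linearPl linearP.
move: F; apply: linear_mpoly_ext => [c F1 F2 | c F1 F2 | b] /=.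
- exact: linearP.
- by rewrite !linearP.
rewrite -mpolyXD !contractXX lepmD_subm; case: (a' <= b)%MM => /=; last by rewrite linear0.
by rewrite contractXX submDA [(a' + a)%MM]addmC.
Qed.

Lemma contract1 F : contract 1 F = F.
Proof.
move: F; apply: linear_mpoly_ext => [c F1 F2 | // | b]; first exact: linearP.
rewrite -mpolyX0 contractXX subm0; case: ifP => // /negP[].
by apply/mnm_lepP => i; rewrite mnm0E.
Qed.

Lemma contract_exp g k F : contract (g ^+ k) F = iter k (contract g) F.
Proof. by elim: k => [|k IH]; rewrite ?contract1 // exprS contractM IH. Qed.

Lemma mcoeff_mlin (g : 'X_{1..n} -> {mpoly K[n]}) p x :
  (mlin g p)@_x = \sum_(m <- msupp p) p@_m * (g m)@_x.
Proof. by rewrite raddf_sum /=; apply: eq_bigr => m _; rewrite mcoeffZ. Qed.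

Lemma mcoeff_contractX u F x : (contract 'X_[u] F)@_x = F@_(x + u).
Proof.
rewrite contract_mpolyX mcoeff_mlin [in RHS](mpolyE F) raddf_sum /=.
apply: eq_bigr => b _; rewrite mcoeffZ mcoeffX; congr (_ * _).
case: ifP => le_ub; last first.
  by rewrite mcoeff0; case: eqP => // eq_b; rewrite eq_b lem_addl in le_ub.
rewrite mcoeffX; case: (eqVneq (b - u)%MM x) => [<-|ne]; first by rewrite submK ?eqxx.
by case: eqP => // eq_b; rewrite eq_b addmK eqxx in ne.
Qed.

Lemma mcoeff_contract_mpolyX g b mu : (mu <= b)%MM ->
  (contract g 'X_[b])@_(b - mu) = g@_mu.
Proof.
move=> le_mub; rewrite contractEl mcoeff_mlin [in RHS](mpolyE g) raddf_sum /=.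
apply: eq_bigr => a _; rewrite mcoeffZ mcoeff_contractX !mcoeffX.
case: (eqVneq a mu) => [->|ne]; first by rewrite (submK le_mub) !eqxx.
case: eqP => // eq_b; case/eqP: ne; apply: (can_inj (addmK (b - mu)%MM)) => /=.
by rewrite addmC -eq_b addmC (submK le_mub).
Qed.

Lemma mcoeff0_contract_mpolyX g b : (contract g 'X_[b])@_0 = g@_b.
Proof.
have -> : 0%MM = (b - b)%MM by apply/mnmP => i; rewrite mnmBE subnn mnm0E.
exact/mcoeff_contract_mpolyX/lepm_refl.
Qed.

Lemma mpolyX_dhomog a : ('X_[a] : {mpoly K[n]}) \is (mdeg a).-homog.
Proof. by rewrite dhomogX. Qed.

Lemma contract_dhomog f F i j : f \is i.-homog -> F \is j.-homog ->
  contract f F \is (j - i).-homog.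
Proof.
move=> /dhomogP f_i /dhomogP F_j; rewrite /contract big_seq; apply/rpred_sum => a a_f.
rewrite big_seq; apply/rpred_sum => b b_F; apply/rpredZ; case: ifP => [le_ab|_].
  have da : mdeg a = i := f_i a a_f; have db : mdeg b = j := F_j b b_F.
  by rewrite dhomogX; change (mdeg (b - a)%MM == (j - i)%N); rewrite mdeg_subm // da db.
exact: dhomog0.
Qed.

Lemma contract_dhomog_eq0 f F i j : f \is i.-homog -> F \is j.-homog -> (j < i)%N ->
  contract f F = 0.
Proof.
move=> /dhomogP f_i /dhomogP F_j lt_ji; rewrite /contract big1_seq // => a /= a_f.
rewrite big1_seq // => b /= b_F; case: ifP => [le_ab|_]; last by rewrite scaler0.
have da : mdeg a = i := f_i a a_f; have db : mdeg b = j := F_j b b_F.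
by move: lt_ji; rewrite -da -db ltnNge lepm_mdeg.
Qed.

End Contraction.

Section MonomialAnnihilator.
Variables (K : fieldType) (n : nat) (b : 'X_{1..n}).
Implicit Types (g : {mpoly K[n]}) (mu : 'X_{1..n}).

Lemma mcoeff_Ann_mpolyX g mu : in_Ann 'X_[b] g -> (mu <= b)%MM -> g@_mu = 0.
Proof. by move=> Ag le_mub; rewrite -(mcoeff_contract_mpolyX g le_mub) Ag mcoeff0. Qed.

Lemma sum_mpolyX_outside_box (r : seq 'X_{1..n}) (E : 'X_{1..n} -> K) :
    {in r, forall mu, ~~ (mu <= b)%MM} ->
  exists h : 'I_n -> {mpoly K[n]},
    \sum_(mu <- r) E mu *: 'X_[mu] = \sum_(i < n) h i * 'X_i ^+ (b i).+1.
Proof.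
elim: r => [|mu r IH] out_r.
  by exists (fun=> 0); rewrite big_nil big1 // => i _; rewrite mul0r.
have [|h sum_r] := IH; first by move=> nu nu_r; apply: out_r; rewrite inE nu_r orbT.
have /existsP[i lt_bi] : [exists i, (b i < mu i)%N].
  apply: contraR (out_r mu (mem_head _ _)) => /existsPn le_mub.
  by apply/mnm_lepP => i; rewrite leqNgt le_mub.
have le_mu : (U_(i) *+ (b i).+1 <= mu)%MM.
  by apply/mnm_lepP => j; rewrite mulmnE mnm1E; case: eqP => [<-|_]; rewrite ?mul1n.
exists (fun j => h j + (if j == i then E mu *: 'X_[mu - U_(i) *+ (b i).+1] else 0)).
rewrite big_cons sum_r addrC (eq_bigr _ (fun j _ => mulrDl _ _ _)) big_split /=.
congr (_ + _).
rewrite (bigD1 i) //= eqxx big1 ?addr0 => [|j /negbTE->]; last by rewrite mul0r.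
by rewrite -scalerAl mpolyXn -mpolyXD submK.
Qed.

Lemma Ann_mpolyX g : in_Ann 'X_[b] g <->
  exists h : 'I_n -> {mpoly K[n]}, g = \sum_(i < n) h i * 'X_i ^+ (b i).+1.
Proof.
split=> [Ag | [h ->]].
  rewrite [g]mpolyE; apply: sum_mpolyX_outside_box => mu mu_g; apply/negP => le_mub.
  by move: mu_g; rewrite mcoeff_msupp (mcoeff_Ann_mpolyX Ag le_mub) eqxx.
rewrite /in_Ann linear_sumlz /= big1 // => i _; rewrite contractM mpolyXn contractXX.
case: ifP => [/mnm_lepP/(_ i)|_]; last exact: linear0.
by rewrite mulmnE mnm1E eqxx mul1n ltnn.
Qed.

Lemma complete_intersection_mpolyX : complete_intersection ('X_[b] : {mpoly K[n]}).
Proof. by exists (fun i => 'X_i ^+ (b i).+1) => g; apply: Ann_mpolyX. Qed.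

Lemma full_codim_mpolyX : (forall i, 0 < b i)%N -> full_codim ('X_[b] : {mpoly K[n]}).
Proof.
move=> b_gt0 l /dhomogP l1 Al; apply/mpolyP => mu; rewrite mcoeff0.
have [mu_l|/memN_msupp_eq0 //] := boolP (mu \in msupp l).
have /mdeg1P[i /eqP->] : mdeg mu == 1%N by apply/eqP; apply: l1.
by apply: mcoeff_Ann_mpolyX; rewrite // lep1mP -lt0n.
Qed.

End MonomialAnnihilator.

Section CompMpoly.
Variables (K : comNzRingType) (n : nat) (lq lr : n.-tuple {mpoly K[n]}).

Lemma comp_mpolyK : (forall i, tnth lr i \mPo lq = 'X_i) ->
  cancel (comp_mpoly lr) (comp_mpoly lq).
Proof.
move=> lrK p; rewrite [p \mPo lr]comp_mpolyEX raddf_sum [RHS]mpolyE /=.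
apply: eq_bigr => m _.
rewrite linearZ comp_mpolyX rmorph_prod mpolyXE_id /=; congr (_ *: _).
by apply: eq_bigr => i _; rewrite rmorphXn /= lrK.
Qed.

Lemma comp_mpoly_dhomog p d : (forall i, tnth lq i \is 1.-homog) ->
  p \is d.-homog -> p \mPo lq \is d.-homog.
Proof.
move=> lq1 /dhomogP p_d; rewrite comp_mpolyEX big_seq; apply/rpred_sum => m m_p.
apply/dhomogZ; rewrite comp_mpolyX; have <- : mdeg m = d := p_d m m_p.
rewrite mdegE; apply: (big_ind2 (fun (q : {mpoly K[n]}) k => q \is k.-homog)).
- exact: dhomog1.
- by move=> q1 q2 k1 k2; apply: dhomogM.
by move=> i _; have := dhomogMn (m i) (lq1 i); rewrite mul1n.
Qed.

End CompMpoly.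

Section DualSubstitution.
Variables (K : fieldType) (n : nat) (lq lr : n.-tuple {mpoly K[n]}).
Hypotheses (lq_homog : forall i, tnth lq i \is 1.-homog)
           (lr_homog : forall i, tnth lr i \is 1.-homog).
Hypotheses (lqK : forall i, tnth lq i \mPo lr = 'X_i)
           (lrK : forall i, tnth lr i \mPo lq = 'X_i).
Implicit Types (f g P : {mpoly K[n]}) (a b : 'X_{1..n}).

(* The adjoint of p |-> p \mPo lq for the pairing <f, P> = (contract f P)@_0, see
   [mcoeff_dual_subst]; the bound on mdeg a loses nothing as lq is homogeneous. *)
Definition dual_subst : {mpoly K[n]} -> {mpoly K[n]} :=
  mlin (fun b => \sum_(a : 'X_{1..n < (mdeg b).+1})
                   (contract ('X_[a] \mPo lq) 'X_[b])@_0 *: 'X_[a]).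

HB.instance Definition _ := GRing.Linear.copy dual_subst (mlin _).

Lemma mcoeff_dual_subst P a : (dual_subst P)@_a = (contract ('X_[a] \mPo lq) P)@_0.
Proof.
rewrite (linear_mpolyE (contract_linearr _) P) !mcoeff_mlin.
apply: eq_bigr => b _; congr (_ * _).
have [lt_ab | le_ba] := ltnP (mdeg a) (mdeg b).+1.
  exact: (mcoeff_mpoly (fun a => (contract ('X_[a] \mPo lq) 'X_[b])@_0)).
rewrite raddf_sum big1 /= => [|a' _]; last first.
  rewrite mcoeffZ mcoeffX; case: eqP => [eq_a|]; last by rewrite mulr0.
  by have := bmdeg a'; rewrite eq_a ltnNge le_ba.
have Xa_homog := comp_mpoly_dhomog lq_homog (mpolyX_dhomog K a).
by rewrite (contract_dhomog_eq0 Xa_homog (mpolyX_dhomog K b)) ?mcoeff0.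
Qed.

Lemma contract_dual_subst f P :
  contract f (dual_subst P) = dual_subst (contract (f \mPo lq) P).
Proof.
move: f; apply: linear_mpoly_ext => [c f g | c f g | u] /=; first exact: linearPl.
  by rewrite linearP /= linearPl linearP.
apply/mpolyP => x; rewrite mcoeff_contractX !mcoeff_dual_subst.
by rewrite mpolyXD rmorphM contractM.
Qed.

Lemma dual_subst_dhomog P d : P \is d.-homog -> dual_subst P \is d.-homog.
Proof.
move=> P_d; apply/dhomogP => a; rewrite mcoeff_msupp mcoeff_dual_subst.
have Xa_homog := comp_mpoly_dhomog lq_homog (mpolyX_dhomog K a).
apply: contraNeq => ne_ad; case: (ltngtP (mdeg a) d) => [lt_ad|lt_da|/eqP]; last first.
- by rewrite (negbTE ne_ad).
- by rewrite (contract_dhomog_eq0 Xa_homog P_d lt_da) mcoeff0.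
apply/eqP/(dhomog_nemf_coeff (contract_dhomog Xa_homog P_d)).
by change (mdeg (0 : 'X_{1..n}) != (d - mdeg a)%N); rewrite mdeg0 eq_sym subn_eq0 -ltnNge.
Qed.

Lemma mcoeff0_dual_subst P : (dual_subst P)@_0 = P@_0.
Proof. by rewrite mcoeff_dual_subst mpolyX0 comp_mpoly1 contract1. Qed.

Lemma dual_subst_eq0 P : dual_subst P = 0 -> P = 0.
Proof.
move=> TP0; apply/mpolyP => a; rewrite mcoeff0 -[a]add0m -mcoeff_contractX.
rewrite -(comp_mpolyK lrK 'X_[a]) -mcoeff0_dual_subst -contract_dual_subst.
by rewrite TP0 linear0 mcoeff0.
Qed.

Lemma in_Ann_dual_subst P f : in_Ann (dual_subst P) f <-> in_Ann P (f \mPo lq).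
Proof.
rewrite /in_Ann contract_dual_subst; split=> [/dual_subst_eq0 // | ->].
exact: linear0.
Qed.

Lemma complete_intersection_dual_subst P :
  complete_intersection P -> complete_intersection (dual_subst P).
Proof.
move=> [g AnnP]; exists (fun i => g i \mPo lr) => f; rewrite in_Ann_dual_subst AnnP.
split=> [[h fE] | [h ->]].
  exists (fun i => h i \mPo lr); rewrite -[f](comp_mpolyK lqK) fE rmorph_sum.
  by apply: eq_bigr => i _; rewrite rmorphM.
exists (fun i => h i \mPo lq); rewrite rmorph_sum; apply: eq_bigr => i _.
by rewrite rmorphM /= comp_mpolyK.
Qed.

Lemma full_codim_dual_subst P : full_codim P -> full_codim (dual_subst P).
Proof.
move=> codimP l l1 /in_Ann_dual_subst Al.
by rewrite -[l](comp_mpolyK lqK) (codimP _ (comp_mpoly_dhomog lq_homog l1) Al) linear0.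
Qed.

Lemma SLP_dual_subst P : SLP P -> SLP (dual_subst P).
Proof.
move=> [l [l1 SLP_l]]; exists (l \mPo lr); split; first exact: comp_mpoly_dhomog.
have lk_subst k f : ((l \mPo lr) ^+ k * f) \mPo lq = l ^+ k * (f \mPo lq).
  by rewrite rmorphM rmorphXn /= comp_mpolyK.
move=> i k k_gt0; case: (SLP_l i k k_gt0) => [inj | surj]; [left=> f f_i | right=> g g_ik].
  rewrite !in_Ann_dual_subst lk_subst => /inj; apply.
  exact: comp_mpoly_dhomog.
have [f [f_i Af]] := surj _ (comp_mpoly_dhomog lq_homog g_ik).
exists (f \mPo lr); split; first exact: comp_mpoly_dhomog.
by rewrite in_Ann_dual_subst linearB /= lk_subst comp_mpolyK.
Qed.

End DualSubstitution.

Lemma dual_subst_id (K : fieldType) n (P : {mpoly K[n]}) :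
  dual_subst [tuple 'X_i | i < n] P = P.
Proof.
apply/mpolyP => a; rewrite mcoeff_dual_subst => [|i].
  by rewrite comp_mpoly_id mcoeff_contractX add0m.
by rewrite tnth_mktuple dhomogX; apply/eqP; apply: mdeg1.
Qed.

Section Shear.
Variables (K : fieldType) (c : nat) (c_gt1 : (1 < c)%N).
Local Notation i0 := (Ordinal (ltnW c_gt1)).
Local Notation i1 := (Ordinal c_gt1).
Implicit Types (t : K) (a b : 'X_{1..c}).

Let i01 : (i0 == i1) = false. Proof. by []. Qed.

Definition shear t : c.-tuple {mpoly K[c]} :=
  [tuple if i == i1 then t *: 'X_i0 + 'X_i1 else 'X_i | i < c].

Lemma shear_homog t i : tnth (shear t) i \is 1.-homog.
Proof.
have X_homog (j : 'I_c) : ('X_j : {mpoly K[c]}) \is 1.-homog.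
  by rewrite dhomogX; apply/eqP; apply: mdeg1.
by rewrite tnth_mktuple; case: ifP => _; rewrite ?rpredD ?rpredZ.
Qed.

Lemma shearK t i : tnth (shear t) i \mPo shear (- t) = 'X_i.
Proof.
rewrite tnth_mktuple; case: ifP => [/eqP-> | ne_i]; last first.
  by rewrite comp_mpolyXU -tnth_nth tnth_mktuple ne_i.
rewrite linearP /= !comp_mpolyXU -!tnth_nth !tnth_mktuple /=.
by rewrite scaleNr addNKr.
Qed.

Lemma shearNK t i : tnth (shear (- t)) i \mPo shear t = 'X_i.
Proof. by have := shearK (- t) i; rewrite opprK. Qed.

Lemma shear0 : shear 0 = [tuple 'X_i | i < c].
Proof. by apply: eq_mktuple => i; case: ifP => [/eqP-> |]; rewrite ?scale0r ?add0r. Qed.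

Lemma complete_intersection_dual_shear t P :
  complete_intersection P -> complete_intersection (dual_subst (shear t) P).
Proof.
exact: (complete_intersection_dual_subst (shear_homog t) (shearK t) (shearNK t)).
Qed.

Lemma full_codim_dual_shear t P : full_codim P -> full_codim (dual_subst (shear t) P).
Proof. exact: (full_codim_dual_subst (shear_homog t) (shearK t) (shearNK t)). Qed.

Lemma SLP_dual_shear t P : SLP P -> SLP (dual_subst (shear t) P).
Proof.
exact: (SLP_dual_subst (shear_homog t) (shear_homog (- t)) (shearNK t)).
Qed.

Lemma comp_shear_mpolyX t a : 'X_[a] \mPo shear t =
  \sum_(k < (a i1).+1) (t ^+ k * ('C(a i1, k))%:R) *: 'X_[a - U_(i1) *+ k + U_(i0) *+ k].
Proof.
rewrite comp_mpolyX (bigD1 i1) //= tnth_mktuple eqxx addrC exprDn.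
have -> : \prod_(i < c | i != i1) tnth (shear t) i ^+ a i = 'X_[a - U_(i1) *+ a i1].
  rewrite mpolyXE_id [RHS](bigD1 i1) //= mnmBE mulmnE mnm1E eqxx mul1n subnn.
  rewrite expr0 mul1r.
  apply: eq_bigr => i ne_i; rewrite tnth_mktuple (negbTE ne_i) mnmBE mulmnE mnm1E.
  by rewrite eq_sym (negbTE ne_i) mul0n subn0.
rewrite big_distrl /=; apply: eq_bigr => k _.
rewrite exprZn -scalerAr mulrnAl -scalerAl -scaler_nat scalerA mulrC !mpolyXn -!mpolyXD.
congr (_ *: 'X_[_]); apply/mnmP => i; rewrite !(mnmDE, mnmBE, mulmnE, mnm1E).
have := ltn_ord k; case: (eqVneq i i1) => [->|_]; first by rewrite i01; lia.
by case: (eqVneq i0 i) => [<-|_]; lia.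
Qed.

Lemma mcoeff_dual_shear t b a : (dual_subst (shear t) 'X_[b])@_a =
  \sum_(k < (a i1).+1)
     t ^+ k * ('C(a i1, k))%:R * ((a - U_(i1) *+ k + U_(i0) *+ k)%MM == b)%:R.
Proof.
rewrite mcoeff_dual_subst ?mcoeff0_contract_mpolyX => [|i]; last exact: shear_homog.
by rewrite comp_shear_mpolyX raddf_sum /=; apply: eq_bigr => k _; rewrite mcoeffZ mcoeffX.
Qed.

Definition shear_shift b q := (b - U_(i0) *+ q + U_(i1) *+ q)%MM.

Definition shear_orbit b := map (shear_shift b) (iota 0 (b i0).+1).

Lemma shear_shift_i1 b q : shear_shift b q i1 = (b i1 + q)%N.
Proof.
by rewrite /shear_shift !(mnmDE, mnmBE, mulmnE, mnm1E) i01 eqxx mul0n subn0 mul1n.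
Qed.

Lemma shear_shift_eq a b k : (k <= a i1)%N ->
  ((a - U_(i1) *+ k + U_(i0) *+ k)%MM == b) =
  (k <= b i0)%N && (a == shear_shift b k).
Proof.
move=> le_ka; apply/eqP/andP => [<- | [le_kb /eqP->]].
  split; first by rewrite mnmDE mulmnE mnm1E eqxx mul1n leq_addl.
  apply/eqP/mnmP => i; rewrite !(mnmDE, mnmBE, mulmnE, mnm1E).
  by case: (eqVneq i1 i) => [<-|_]; last case: (eqVneq i0 i) => [<-|_]; rewrite ?i01; lia.
apply/mnmP => i; rewrite !(mnmDE, mnmBE, mulmnE, mnm1E).
by case: (eqVneq i1 i) => [<-|_]; last case: (eqVneq i0 i) => [<-|_]; rewrite ?i01; lia.
Qed.

Lemma mcoeff_dual_shear_out t b a : a \notin shear_orbit b ->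
  (dual_subst (shear t) 'X_[b])@_a = 0.
Proof.
move=> a_out; rewrite mcoeff_dual_shear big1 // => k _.
rewrite (shear_shift_eq _ (leq_ord k)).
case: andP => [[le_kb /eqP a_k]|_]; last by rewrite mulr0.
by case/mapP: a_out; exists (k : nat); rewrite // mem_iota ltnS.
Qed.

Lemma mcoeff_dual_shear_orbit t b q : (q <= b i0)%N ->
  (dual_subst (shear t) 'X_[b])@_(shear_shift b q) = t ^+ q * ('C(b i1 + q, q))%:R.
Proof.
move=> le_qb; have lt_q : (q < (shear_shift b q i1).+1)%N.
  by rewrite shear_shift_i1 ltnS leq_addl.
rewrite mcoeff_dual_shear (bigD1 (Ordinal lt_q)) //= big1 => [|k ne_kq].
  by rewrite shear_shift_eq ?shear_shift_i1 ?leq_addl // le_qb eqxx mulr1 addr0.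
rewrite (shear_shift_eq _ (leq_ord k)).
case: andP => [[_ /eqP/mnmP/(_ i1) eq_i1]|_]; last by rewrite mulr0.
have /addnI eq_qk : (b i1 + q = b i1 + k)%N by rewrite -!shear_shift_i1.
by case/eqP: ne_kq; apply: val_inj.
Qed.

Lemma perm_msupp_dual_shear t b : t != 0 -> [pchar K] =i pred0 ->
  perm_eq (msupp (dual_subst (shear t) 'X_[b])) (shear_orbit b).
Proof.
move=> t_neq0 charK0; apply: uniq_perm; rewrite ?msupp_uniq //.
  rewrite map_inj_uniq ?iota_uniq // => q q' /mnmP/(_ i1).
  by rewrite !shear_shift_i1 => /addnI.
move=> a; rewrite mcoeff_msupp.
have [/mapP[q q_iota ->]|a_out] := boolP (a \in shear_orbit b); last first.
  by rewrite mcoeff_dual_shear_out ?eqxx.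
have le_qb : (q <= b i0)%N by move: q_iota; rewrite mem_iota ltnS.
rewrite mcoeff_dual_shear_orbit // mulf_neq0 ?expf_neq0 //.
by rewrite (pcharf0P K).1 // -lt0n bin_gt0 leq_addl.
Qed.

End Shear.

Lemma iter_linear (K : pzRingType) (V : lmodType K) (g : {linear V -> V}) k :
  linear (iter k g).
Proof. by elim: k => [|k IH] a u v //=; rewrite IH linearP. Qed.

Section Sl2Lefschetz.
Variables (K : fieldType) (V : lmodType K) (d : nat).
Hypothesis charK0 : [pchar K] =i pred0.
Variables (W : nat -> {pred V}) (e f : {linear V -> V}).
Hypothesis W_submod : forall j, submod_closed (W j).
Hypothesis e_W : forall j v, v \in W j -> e v \in W j.-1.
Hypothesis e_W0 : forall v, v \in W 0 -> e v = 0.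
Hypothesis f_W : forall j v, v \in W j -> f v \in W j.+1.
Hypothesis W_gt : forall j v, (d < j)%N -> v \in W j -> v = 0.
Hypothesis ef_comm :
  forall j v, v \in W j -> e (f v) - f (e v) = (d%:R - (2 * j)%:R) *: v.

Local Notation w j := (d%:R - (2 * j)%:R : K).

Let natr_neq0 k : k.+1%:R != 0 :> K.
Proof. by rewrite (pcharf0P K).1. Qed.

Let W_lin j a u v : u \in W j -> v \in W j -> a *: u + v \in W j.
Proof. exact: (W_submod j).2. Qed.

Let W_D j u v : u \in W j -> v \in W j -> u + v \in W j.
Proof. by move=> u_j v_j; rewrite -[u]scale1r W_lin. Qed.

Let W_Z j a u : u \in W j -> a *: u \in W j.
Proof. by move=> u_j; rewrite -[a *: u]addr0 W_lin // (W_submod j).1. Qed.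

Let natrB_neq0 a b : (a < b)%N -> b%:R - a%:R != 0 :> K.
Proof. by move=> lt_ab; rewrite -natrB ?(ltnW lt_ab) // -(subnSK lt_ab). Qed.

Let iter_e0 k : iter k e 0 = 0.
Proof.
by rewrite -[X in iter _ _ X](subr0 0) (zmod_morphism_linear (iter_linear e k)) subrr.
Qed.

Let iter_eZ k a v : iter k e (a *: v) = a *: iter k e v.
Proof. by rewrite -[a *: v]addr0 iter_linear iter_e0 addr0. Qed.

Let iter_eD k u v : iter k e (u + v) = iter k e u + iter k e v.
Proof. by have := iter_linear e k 1 u v; rewrite !scale1r. Qed.

Lemma e_f_comm j v : v \in W j -> e (f v) = f (e v) + w j *: v.
Proof. by move=> v_j; rewrite -(ef_comm v_j) addrC subrK. Qed.

Lemma iter_e_W k j v : v \in W j -> iter k e v \in W (j - k).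
Proof.
elim: k => [|k IH] v_j; first by rewrite subn0.
by rewrite subnS /=; apply/e_W/IH.
Qed.

Lemma iter_f_W k j v : v \in W j -> iter k f v \in W (j + k).
Proof.
elim: k => [|k IH] v_j; first by rewrite addn0.
by rewrite addnS /=; apply/f_W/IH.
Qed.

Lemma iter_e_eq0 k j v : v \in W j -> (j < k)%N -> iter k e v = 0.
Proof.
move=> v_j lt_jk; rewrite -(subnK lt_jk) iterD iterS e_W0 ?iter_e0 //.
by rewrite -(subnn j); apply: iter_e_W.
Qed.

Lemma iter_e_f k j v : v \in W j ->
  iter k.+1 e (f v) = f (iter k.+1 e v) + (k.+1%:R * (w j + k%:R)) *: iter k e v.
Proof.
move=> v_j; elim: k => [|k IH]; first by rewrite /= (e_f_comm v_j) mul1r addr0.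
rewrite iterS IH linearD linearZ /= -iterS.
have -> : e (f (iter k.+1 e v)) =
    f (iter k.+2 e v) + (w j + (2 * k.+1)%:R) *: iter k.+1 e v.
  have [le_kj | lt_jk] := leqP k.+1 j; last first.
    by rewrite !(iter_e_eq0 v_j) ?linear0 ?scaler0 ?addr0 // ltnW.
  rewrite (e_f_comm (iter_e_W k.+1 v_j)); congr (_ + _ *: _).
  by rewrite mulnBr natrB ?leq_mul2l ?le_kj ?orbT //; ring.
by rewrite -addrA -scalerDl !natrM !mulrS; congr (_ + _ *: _); ring.
Qed.

Lemma e_iter_f k j v : v \in W j -> e v = 0 ->
  e (iter k.+1 f v) = (k.+1%:R * (w j - k%:R)) *: iter k f v.
Proof.
move=> v_j ev0; elim: k => [|k IH].
  by rewrite /= (e_f_comm v_j) ev0 linear0 add0r subr0 mul1r.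
rewrite iterS (e_f_comm (iter_f_W k.+1 v_j)) IH linearZ /= -iterS -scalerDl.
by congr (_ *: _); rewrite !natrM !natrD !mulrS; ring.
Qed.

Lemma iter_e_iter_f k j v : v \in W j -> e v = 0 ->
  iter k e (iter k f v) = (\prod_(i < k) (i.+1%:R * (w j - i%:R))) *: v.
Proof.
move=> v_j ev0; elim: k => [|k IH]; first by rewrite big_ord0 scale1r.
by rewrite iterSr (e_iter_f k v_j ev0) iter_eZ IH scalerA big_ord_recr /= mulrC.
Qed.

Lemma iter_e_inj_ker_f k j v : v \in W j -> f v = 0 ->
  (d + k <= 2 * j)%N -> iter k e v = 0 -> v = 0.
Proof.
move=> v_j fv0; elim: k => [//|k IH] le_dkj ekv0; apply: IH; first lia.
have := iter_e_f k v_j; rewrite fv0 iter_e0 ekv0 linear0 add0r => /esym/eqP.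
rewrite scaler_eq0 mulf_eq0 (negbTE (natr_neq0 _)) /= => /orP[|/eqP //].
have -> : w j + k%:R = - ((2 * j)%:R - (d + k)%:R) by rewrite natrD; ring.
by rewrite oppr_eq0 (negbTE (natrB_neq0 _)) //; lia.
Qed.

Lemma iter_e_inj k j v : v \in W j -> (d + k <= 2 * j)%N -> iter k e v = 0 -> v = 0.
Proof.
(* Downward induction on j: f v lies in W j.+1 and is killed by e^(k+1). *)
move=> v_j; have [r] : exists r, (d < j + r)%N by exists d.+1; lia.
elim: r j k v v_j => [|r IH] j k v v_j lt_djr le_dkj ekv0.
  by apply: (W_gt _ v_j); lia.
have fv0 : f v = 0.
  apply: (IH j.+1 k.+1); [exact: f_W | lia | lia |].
  by rewrite (iter_e_f k v_j) ekv0 scaler0 addr0 iterS ekv0 !linear0.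
exact: iter_e_inj_ker_f v_j fv0 le_dkj ekv0.
Qed.

Lemma iter_e_surj_ker_e k j v : v \in W j -> e v = 0 -> (2 * j + k <= d)%N ->
  exists2 u, u \in W (j + k) & iter k e u = v.
Proof.
move=> v_j ev0 le_jkd; set C := \prod_(i < k) (i.+1%:R * (w j - i%:R)).
have C_neq0 : C != 0.
  rewrite prodf_seq_neq0; apply/allP => i _ /=; rewrite mulf_neq0 //.
  have -> : w j - i%:R = d%:R - (2 * j + i)%:R by rewrite natrD opprD addrA.
  by apply: natrB_neq0; have := ltn_ord i; lia.
exists (C^-1 *: iter k f v); first exact/W_Z/iter_f_W.
by rewrite iter_eZ (iter_e_iter_f k v_j ev0) scalerA mulVf // scale1r.
Qed.

Lemma iter_e_surj k j v : v \in W j -> (2 * j + k <= d)%N ->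
  exists2 u, u \in W (j + k) & iter k e u = v.
Proof.
(* Induction on j: lift e v through e^(k+1); what is left of v is killed by e. *)
elim: j k v => [|j IH] k v v_j le_jkd; first exact: iter_e_surj_ker_e (e_W0 v_j) _.
have [z z_jk ekz] := IH k.+1 (e v) (e_W v_j) ltac:(lia).
have y_j : v - iter k e z \in W j.+1.
  rewrite -scaleN1r addrC W_lin //; have := iter_e_W k z_jk.
  by rewrite (_ : j + k.+1 - k = j.+1)%N //; lia.
have ey0 : e (v - iter k e z) = 0 by rewrite linearB /= -iterS ekz subrr.
have [u u_jk eku] := iter_e_surj_ker_e y_j ey0 le_jkd.
exists (z + u); first by rewrite addSnnS W_D // -addSnnS.
by rewrite iter_eD eku addrC subrK.
Qed.

End Sl2Lefschetz.

Section MonomialSl2.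
Variables (K : fieldType) (n : nat) (b : 'X_{1..n}).
Implicit Types (p u : {mpoly K[n]}) (a : 'X_{1..n}).

Definition boxed : {pred {mpoly K[n]}} :=
  fun p => all (fun a => (a <= b)%MM) (msupp p).

Lemma boxed_submod : submod_closed boxed.
Proof.
split=> [|c p q /allP p_b /allP q_b]; first by rewrite unfold_in /boxed msupp0.
apply/allP => a /msuppD_le; rewrite mem_cat => /orP[/msuppZ_le/p_b | /q_b] //.
Qed.

HB.instance Definition _ := GRing.isSubmodClosed.Build K {mpoly K[n]} boxed boxed_submod.

Lemma boxedP p : reflect {in msupp p, forall a, (a <= b)%MM} (p \in boxed).
Proof. exact: allP. Qed.

Lemma boxedX a : ('X_[a] \in boxed) = (a <= b)%MM.
Proof. by rewrite unfold_in /boxed msuppX /= andbT. Qed.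

Lemma contract_boxed f p : p \in boxed -> contract f p \in boxed.
Proof.
move=> /boxedP p_b; rewrite /contract rpred_sum // => a' _.
rewrite big_seq rpred_sum // => a a_p; rewrite rpredZ //.
by case: ifP => _; rewrite ?rpred0 // boxedX (lepm_trans (lem_subr _ _) (p_b a a_p)).
Qed.

Definition weight_space j : {pred {mpoly K[n]}} :=
  [pred p | (p \in boxed) && (p \is j.-homog)].

Lemma weight_space_submod j : submod_closed (weight_space j).
Proof.
split=> [|c p q /andP[p_b p_j] /andP[q_b q_j]]; first by rewrite inE rpred0 dhomog0.
by rewrite inE rpredD ?rpredZ // dhomogD ?dhomogZ.
Qed.

Lemma weight_space_gt j p : (mdeg b < j)%N -> p \in weight_space j -> p = 0.
Proof.
move=> lt_bj /andP[/boxedP p_b /dhomogP p_j]; apply/mpolyP => a; rewrite mcoeff0.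
apply/memN_msupp_eq0/negP => a_p; have a_j : mdeg a = j := p_j a a_p.
by move: lt_bj; rewrite -a_j ltnNge lepm_mdeg // p_b.
Qed.

Definition sumX : {mpoly K[n]} := \sum_(i < n) 'X_i.

Lemma sumX_homog : sumX \is 1.-homog.
Proof. by rewrite rpred_sum // => i _; rewrite dhomogX; apply/eqP; apply: mdeg1. Qed.

Lemma contract_sumX_weight j p :
  p \in weight_space j -> contract sumX p \in weight_space j.-1.
Proof.
case/andP=> p_b p_j; rewrite inE contract_boxed //= -subn1.
exact: contract_dhomog sumX_homog p_j.
Qed.

Lemma contract_sumX_weight0 p : p \in weight_space 0 -> contract sumX p = 0.
Proof. by case/andP=> _ p_0; apply: contract_dhomog_eq0 sumX_homog p_0 _. Qed.

(* The X^[a], a <= b, span the tensor product of the simple sl_2-modules of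
   dimensions b_i + 1, and [raise] is the raising operator dual to the lowering
   operator [contract sumX]. *)
Local Notation cf a i := (((a i).+1 * (b i - a i))%:R : K).

Definition raise : {mpoly K[n]} -> {mpoly K[n]} :=
  mlin (fun a => \sum_(i < n) cf a i *: 'X_[a + U_(i)]).

HB.instance Definition _ := GRing.Linear.copy raise (mlin _).

Lemma raise_weight j p : p \in weight_space j -> raise p \in weight_space j.+1.
Proof.
case/andP=> /boxedP p_b /dhomogP p_j; rewrite inE /raise /mlin big_seq.
apply/andP; split.
  rewrite rpred_sum // => a a_p; rewrite rpredZ // rpred_sum // => i _.
  have [lt_ab | le_ba] := ltnP (a i) (b i); last first.
    rewrite (_ : b i - a i = 0)%N ?muln0 ?scale0r ?rpred0 //.
    by apply/eqP; rewrite subn_eq0.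
  rewrite rpredZ // boxedX; apply/mnm_lepP => l; rewrite mnmDE mnm1E.
  by case: eqP => [<-|_]; rewrite ?addn1 ?addn0 //; apply/mnm_lepP/p_b.
apply/rpred_sum => a a_p; apply/dhomogZ/rpred_sum => i _; apply/dhomogZ.
have a_j : mdeg a = j := p_j a a_p.
by rewrite dhomogX; change (mdeg (a + U_(i))%MM == j.+1); rewrite mdegD mdeg1 a_j addn1.
Qed.

Lemma contract_sumX_mpolyX a :
  contract sumX 'X_[a] = \sum_(k < n) (if (U_(k) <= a)%MM then 'X_[a - U_(k)] else 0).
Proof. by rewrite /sumX linear_sumlz; apply: eq_bigr => k _; rewrite /= contractXX. Qed.

Let natrB_swap (x y z w : nat) : (x + z = w + y)%N -> x%:R - y%:R = w%:R - z%:R :> K.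
Proof.
by move=> eq_xzwy; apply/eqP; rewrite subr_eq addrAC eq_sym subr_eq -!natrD eq_xzwy.
Qed.

Lemma raise_lower_pair a i k : (a <= b)%MM ->
  cf a i *: (if (U_(k) <= a + U_(i))%MM then 'X_[a + U_(i) - U_(k)] else 0) -
  (if (U_(k) <= a)%MM then cf (a - U_(k))%MM i *: 'X_[a - U_(k) + U_(i)] else 0) =
  if i == k then ((b i)%:R - (2 * a i)%:R) *: 'X_[a] else 0.
Proof.
move=> /mnm_lepP a_b; have := a_b i; rewrite !lep1mP mnmDE mnm1E.
case: (eqVneq i k) => [<- | ne_ik] le_abi.
  rewrite addn1 /= addmK; case: (eqVneq (a i) 0%N) => [a_i0 | a_i] /=.
    by rewrite subr0 a_i0 subn0 mul1n muln0 subr0.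
  rewrite submK ?lep1mP // -scalerBl mnmBE mnm1E eqxx; congr (_ *: _).
  by apply: natrB_swap; move: le_abi a_i; set x := a i; set y := b i; nia.
rewrite /= addn0; case: (eqVneq (a k) 0%N) => [//|a_k] /=; first by rewrite scaler0 subrr.
rewrite mnmBE mnm1E eq_sym (negbTE ne_ik) subn0; apply/eqP; rewrite subr_eq0.
apply/eqP; congr (_ *: 'X_[_]); apply/mnmP => l; rewrite !(mnmBE, mnmDE, mnm1E).
case: (eqVneq k l) => [<-|_]; last case: (eqVneq i l) => [<-|_].
all: by rewrite /= ?(negbTE ne_ik); lia.
Qed.

Lemma contract_sumX_raise_mpolyX a : (a <= b)%MM ->
  contract sumX (raise 'X_[a]) - raise (contract sumX 'X_[a]) =
  ((mdeg b)%:R - (2 * mdeg a)%:R) *: 'X_[a].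
Proof.
move=> a_b.
have -> : contract sumX (raise 'X_[a]) = \sum_i \sum_k
    cf a i *: (if (U_(k) <= a + U_(i))%MM then 'X_[a + U_(i) - U_(k)] else 0).
  rewrite /raise mlinX linear_sum; apply: eq_bigr => i _.
  by rewrite linearZ /= contract_sumX_mpolyX scaler_sumr.
have -> : raise (contract sumX 'X_[a]) = \sum_i \sum_k
    (if (U_(k) <= a)%MM then cf (a - U_(k))%MM i *: 'X_[a - U_(k) + U_(i)] else 0).
  rewrite contract_sumX_mpolyX linear_sum [RHS]exchange_big; apply: eq_bigr => k _ /=.
  by case: ifP => _; [rewrite /raise mlinX | rewrite linear0 big1].
rewrite -sumrB (eq_bigr (fun i => ((b i)%:R - (2 * a i)%:R) *: 'X_[a])) => [|i _].
  by rewrite -scaler_suml sumrB -!natr_sum -big_distrr -!mdegE.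
rewrite -sumrB (bigD1 i) //= raise_lower_pair // eqxx big1 ?addr0 // => k ne_ki.
by rewrite raise_lower_pair // eq_sym (negbTE ne_ki).
Qed.

Lemma contract_sumX_raise j p : p \in weight_space j ->
  contract sumX (raise p) - raise (contract sumX p) = ((mdeg b)%:R - (2 * j)%:R) *: p.
Proof.
case/andP=> /boxedP p_b /dhomogP p_j.
have comm_linear : linear (fun p => contract sumX (raise p) - raise (contract sumX p)).
  by move=> c u v; rewrite !linearP /= scalerN scalerBr addrACA.
rewrite (linear_mpolyE comm_linear) [in RHS](mpolyE p) /mlin scaler_sumr.
apply: eq_big_seq => a a_p; have a_j : mdeg a = j := p_j a a_p.
by rewrite contract_sumX_raise_mpolyX ?p_b // a_j !scalerA mulrC.
Qed.

Lemma contract_complement u : u \in boxed ->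
  contract (mlin (fun a => 'X_[b - a]) u) 'X_[b] = u.
Proof.
move=> /boxedP u_b.
have comp_linear : linear (fun u => contract (mlin (fun a => 'X_[b - a]) u) 'X_[b]).
  by move=> c v w; rewrite linearP linearPl.
rewrite (linear_mpolyE comp_linear) [in RHS](mpolyE u); apply: eq_big_seq => a a_u /=.
by rewrite mlinX contractXX lem_subr submBA ?u_b // addmC addmK.
Qed.

Lemma SLP_mpolyX : [pchar K] =i pred0 -> SLP ('X_[b] : {mpoly K[n]}).
Proof.
move=> charK0; exists sumX; split=> [|i k k_gt0]; first exact: sumX_homog.
pose d := mdeg b.
have Xb_weight f l : f \is l.-homog -> contract f 'X_[b] \in weight_space (d - l).
  move=> f_l; rewrite inE contract_boxed ?boxedX ?lepm_refl //=.
  exact: contract_dhomog f_l (mpolyX_dhomog _ _).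
have sumX_action (h : {mpoly K[n]}) : contract (sumX ^+ k * h) 'X_[b] =
    iter k (contract sumX) (contract h 'X_[b]).
  by rewrite contractM contract_exp.
have [le_ikd | lt_dik] := leqP (2 * i + k) d.
  left=> f f_i; rewrite /in_Ann sumX_action => ekv0.
  apply: (iter_e_inj charK0 contract_sumX_weight contract_sumX_weight0 raise_weight
            weight_space_gt contract_sumX_raise (Xb_weight f i f_i) _ ekv0).
  lia.
right=> g g_ik; have [lt_d_ik | le_ik_d] := ltnP d (i + k).
  exists 0; split; first exact: dhomog0.
  by rewrite mulr0 subr0 /in_Ann (contract_dhomog_eq0 g_ik (mpolyX_dhomog _ _)).
have [|u u_w eku] := iter_e_surj charK0 weight_space_submod contract_sumX_weight
  contract_sumX_weight0 raise_weight contract_sumX_raise (Xb_weight g _ g_ik)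
  (_ : 2 * (d - (i + k)) + k <= d)%N; first lia.
rewrite (_ : d - (i + k) + k = d - i)%N in u_w; last lia.
case/andP: u_w => u_b /dhomogP u_di.
exists (mlin (fun a => 'X_[b - a]) u); split.
  rewrite /mlin big_seq; apply/rpred_sum => a a_u; apply/dhomogZ.
  have a_di : mdeg a = (d - i)%N := u_di a a_u.
  rewrite dhomogX; change (mdeg (b - a)%MM == i).
  by rewrite mdeg_subm ?(boxedP _ u_b) // a_di; apply/eqP; lia.
by rewrite /in_Ann linearBl /= sumX_action contract_complement // eku subrr.
Qed.

End MonomialSl2.

Unset Implicit Arguments.

Theorem proposition5p1 (K : closedFieldType) (charK0 : [pchar K] =i pred0)
    (s c : nat) (hs : (1 <= s)%N) (hc : (2 <= c)%N) :
  exists (F : {mpoly K[c]}) (d : nat),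
    F \is d.-homog /\
    size (msupp F) = s /\
    complete_intersection F /\
    full_codim F /\
    SLP F.
Proof.
pose t : K := (1 < s)%:R.
pose b : 'X_{1..c} :=
  [multinom if i == Ordinal (ltnW hc) then maxn 1 s.-1 else 1%N | i < c].
have b_gt0 i : (0 < b i)%N by rewrite mnmE; case: ifP; rewrite // leq_max.
exists (dual_subst (shear hc t) 'X_[b]), (mdeg b); split; [|split; [|split; [|split]]].
- exact: (dual_subst_dhomog (shear_homog hc t) (mpolyX_dhomog K b)).
- have [lt1s | le_s1] := ltnP 1 s; last first.
    by rewrite /t ltnNge le_s1 shear0 dual_subst_id msuppX; apply/anti_leq/andP.
  rewrite (perm_size (perm_msupp_dual_shear hc _ _ charK0)) ?size_map ?size_iota.
    by rewrite mnmE eqxx; lia.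
  by rewrite /t lt1s oner_eq0.
- exact/complete_intersection_dual_shear/complete_intersection_mpolyX.
- exact/full_codim_dual_shear/full_codim_mpolyX.
- exact/SLP_dual_shear/SLP_mpolyX.
Qed.
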